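(* For $U\in\mathcal{U}_N$ and $j\in[n]$, $\mathrm{Inf}_j[U]=1-\frac{1}{2^{n+1}}\mathrm{Tr}\big((\mathrm{Tr}_jU^\dagger)(\mathrm{Tr}_jU)\big)$. More generally, for $S\subseteq[n]$, $\mathrm{Inf}_S[U]=1-\frac{1}{2^{n+|S|}}\mathrm{Tr}\big((\mathrm{Tr}_SU^\dagger)(\mathrm{Tr}_SU)\big)$.
   Context: $N=2^n$, $\mathcal{U}_N$ is the set of $N\times N$ unitaries. For $x\in\mathbb{Z}_4^n$, $\sigma_x=\sigma_{x_1}\otimes\cdots\otimes\sigma_{x_n}$ with $\sigma_0=I,\sigma_1=X,\sigma_2=Y,\sigma_3=Z$, and $\mathrm{supp}(x)=\{i:x_i\ne0\}$. Writing $U=\sum_x\widehat{U}(x)\sigma_x$, $\mathrm{Inf}_S[U]=\sum_{x:\,\mathrm{supp}(x)\cap S\ne\emptyset}|\widehat{U}(x)|^2$ and $\mathrm{Inf}_j[U]=\mathrm{Inf}_{\{j\}}[U]$. The partial trace over $S$ is $\mathrm{Tr}_S(U)=\sum_{k\in\{0,1\}^S}(I_{\overline S}\otimes\langle k|)\,U\,(I_{\overline S}\otimes|k\rangle)$, an operator on the qubits in $\overline{S}=[n]\setminus S$; $\mathrm{Tr}_j=\mathrm{Tr}_{\{j\}}$. *)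

From HB Require Import structures.
From mathcomp Require Import all_boot all_order all_algebra.
From mathcomp Require Import algC.
Set Implicit Arguments. Unset Strict Implicit. Unset Printing Implicit Defensive.
Import Order.TTheory GRing.Theory Num.Theory.
Local Open Scope ring_scope.

(* Computational basis states of a register of qubits labelled by a finite type A *)
Definition bits (A : finType) := {ffun A -> bool}.

(* Linear operators on the register A, as matrices indexed by basis states:
   U a b = <a| U |b>. *)
Definition qop (A : finType) := bits A -> bits A -> algC.

Definition qadj (A : finType) (U : qop A) : qop A := fun a b => (U b a)^*.
Definition qmul (A : finType) (U V : qop A) : qop A :=
  fun a b => \sum_(c : bits A) U a c * V c b.
Definition qid (A : finType) : qop A := fun a b => (a == b)%:R.
Definition qtr (A : finType) (U : qop A) : algC := \sum_(a : bits A) U a a.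

Definition unitary (A : finType) (U : qop A) : Prop :=
  qmul (qadj U) U = @qid A /\ qmul U (qadj U) = @qid A.

(* single-qubit Paulis: sigma_0 = I, sigma_1 = X, sigma_2 = Y, sigma_3 = Z;
   entry (r, s) = <r| sigma |s>, with false = |0>, true = |1>. *)
Definition pauli1 (k : 'I_4) (r s : bool) : algC :=
  match nat_of_ord k with
  | 0%N => (r == s)%:R
  | 1%N => (r != s)%:R
  | 2%N => if r == s then 0 else if s then - 'i else 'i
  | _ => if r == s then (if r then -1 else 1) else 0
  end.

Definition sigma (n : nat) (x : {ffun 'I_n -> 'I_4}) : qop 'I_n :=
  fun a b => \prod_(i < n) pauli1 (x i) (a i) (b i).

Definition supp (n : nat) (x : {ffun 'I_n -> 'I_4}) : {set 'I_n} :=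
  [set i | nat_of_ord (x i) != 0%N].

(* Inf_S[U] = sum over x with supp(x) meeting S of |U^(x)|^2,
   where Uhat is the Pauli coefficient function of U. *)
Definition Inf (n : nat) (Uhat : {ffun 'I_n -> 'I_4} -> algC) (S : {set 'I_n}) : algC :=
  \sum_(x : {ffun 'I_n -> 'I_4} | supp x :&: S != set0) `|Uhat x| ^+ 2.

Definition inS (n : nat) (S : {set 'I_n}) := {i : 'I_n | i \in S}.
Definition outS (n : nat) (S : {set 'I_n}) := {i : 'I_n | i \notin S}.

Definition merge (n : nat) (S : {set 'I_n}) (a : bits (outS S)) (k : bits (inS S))
  : bits 'I_n :=
  [ffun i => match boolP (i \in S) with
             | AltTrue h => k (exist _ i h)
             | AltFalse h => a (exist _ i h)
             end].

(* Partial trace over S: Tr_S(U) = sum_k (I ⊗ <k|) U (I ⊗ |k>),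
   an operator on the qubits outside S. *)
Definition ptrace (n : nat) (S : {set 'I_n}) (U : qop 'I_n) : qop (outS S) :=
  fun a b => \sum_(k : bits (inS S)) U (merge a k) (merge b k).
Arguments ptrace {n} S U _ _.

(** Over full basis states, [Tr ((Tr_S V) (Tr_S W))] is the bilinear form
    [Σ_(z, w) V(z, z_S w_S̄) W(w, w_S z_S̄)].  On Pauli strings it factorizes
    over the qubits: a qubit in [S] contributes [Tr σ_(x_i) Tr σ_(y_i) =
    4 [x_i = y_i = 0]], a qubit outside [S] contributes
    [Tr (σ_(x_i) σ_(y_i)) = 2 [x_i = y_i]].  Hence the form at [(U^†, U)] is
    [2^(n+|S|) Σ_(supp x ∩ S = ∅) |Û(x)|^2].  For [S = ∅] it is
    [Tr (U^† U) = 2^n], which is Parseval [Σ_x |Û(x)|^2 = 1], and [Inf_S[U]]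
    is the complementary part of that sum. *)

From Pilot Require Import Defs.
From mathcomp Require Import all_boot all_order all_algebra.
From mathcomp Require Import algC.
From mathcomp Require Import ring.
Set Implicit Arguments. Unset Strict Implicit. Unset Printing Implicit Defensive.
Import Order.TTheory GRing.Theory Num.Theory.
Local Open Scope ring_scope.

Lemma prodr_nat_bool_mul (R : comPzSemiRingType) (I : finType)
    (b : I -> bool) (c : I -> R) :
  \prod_i ((b i)%:R * c i) = [forall i, b i]%:R * \prod_i c i.
Proof.
have [/forallP b_all | /forallPn [i /negbTE bi]] := boolP [forall i, b i].
  by rewrite mul1r; apply: eq_bigr => i _; rewrite b_all mul1r.
by rewrite mul0r (bigD1 i) //= bi !mul0r.
Qed.

Lemma sum_ffun2_prod (R : comPzSemiRingType) (I J : finType)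
    (F : I -> J -> J -> R) :
  \sum_(z : {ffun I -> J}) \sum_(w : {ffun I -> J}) \prod_i F i (z i) (w i)
  = \prod_i \sum_r \sum_s F i r s.
Proof.
rewrite (bigA_distr_bigA (fun i r => \sum_s F i r s)); apply: eq_bigr => z _.
by rewrite (bigA_distr_bigA (fun i s => F i (z i) s)).
Qed.

Lemma pauli1_trace (k : 'I_4) :
  \sum_(r : bool) pauli1 k r r = (nat_of_ord k == 0%N)%:R * 2.
Proof. by case: k => [[|[|[|[|m]]]] Hk] //; rewrite big_bool /pauli1 /=; ring. Qed.

Lemma pauli1_orthogonal (k l : 'I_4) :
  \sum_(r : bool) \sum_(s : bool) pauli1 k r s * pauli1 l s r = (k == l)%:R * 2.
Proof.
case: k => [[|[|[|[|m]]]] Hk] //; case: l => [[|[|[|[|m']]]] Hl] //;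
rewrite !big_bool /pauli1 /= ?mulrN ?mulNr ?opprK -?expr2 ?sqrCi; ring.
Qed.

Lemma pauli1_conj (k : 'I_4) r s : (pauli1 k s r)^* = pauli1 k r s.
Proof.
case: k => [[|[|[|[|m]]]] Hk] //; case: r; case: s;
  rewrite /pauli1 /= ?conjC0 ?conjC1 ?conjCi ?raddfN /= ?conjC1 ?conjCi ?opprK //.
Qed.

Lemma sigma_conj n x (a b : bits 'I_n) : (sigma x b a)^* = sigma x a b.
Proof. by rewrite /sigma rmorph_prod; apply: eq_bigr => i _; apply: pauli1_conj. Qed.

Lemma qadj_pauli_expansion n (U : qop 'I_n) (Uhat : {ffun 'I_n -> 'I_4} -> algC) :
  (forall a b, U a b = \sum_x Uhat x * sigma x a b) ->
  forall a b, qadj U a b = \sum_x (Uhat x)^* * sigma x a b.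
Proof.
move=> U_exp a b; rewrite /qadj U_exp rmorph_sum; apply: eq_bigr => x _.
by rewrite rmorphM /= sigma_conj.
Qed.

Lemma forall_eq_supp_disjoint n (S : {set 'I_n}) (x y : {ffun 'I_n -> 'I_4}) :
  [forall i, (x i == y i) && ((i \in S) ==> (nat_of_ord (x i) == 0%N))]
  = (x == y) && (supp x :&: S == set0).
Proof.
apply/idP/idP => [/forallP xyS | /andP [/eqP <- /eqP xS]]; last first.
  apply/forallP => i; rewrite eqxx /=; apply/implyP => iS; apply: contraT => xi.
  by rewrite -(in_set0 i) -xS !inE xi iS.
apply/andP; split; first by apply/eqP/ffunP => i; apply/eqP; case/andP: (xyS i).
apply/eqP/setP => i; rewrite !inE; apply/negbTE.
rewrite negb_and negbK orbC -implybE.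
by case/andP: (xyS i).
Qed.

(* Plain [merge] would resolve to [path.merge], hence [Defs.merge]. *)
Section PartialTrace.
Variables (n : nat) (S : {set 'I_n}).

Lemma merge_in {a : bits (outS S)} {k : bits (inS S)} {i} (iS : i \in S) :
  Defs.merge a k i = k (exist _ i iS).
Proof.
rewrite /Defs.merge ffunE; destruct (boolP (i \in S)) as [h | h]; last by case/negP: h.
by rewrite (bool_irrelevance h iS).
Qed.

Lemma merge_out {a : bits (outS S)} {k : bits (inS S)} {i} (iS : i \notin S) :
  Defs.merge a k i = a (exist _ i iS).
Proof.
rewrite /Defs.merge ffunE; destruct (boolP (i \in S)) as [h | h]; first by case/negP: iS.
by rewrite (bool_irrelevance h iS).
Qed.

Definition proj_in (z : bits 'I_n) : bits (inS S) := [ffun i => z (val i)].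
Definition proj_out (z : bits 'I_n) : bits (outS S) := [ffun i => z (val i)].

Lemma merge_proj z : Defs.merge (proj_out z) (proj_in z) = z.
Proof.
apply/ffunP => i; have [iS | iS] := boolP (i \in S).
  by rewrite (merge_in iS) ffunE.
by rewrite (merge_out iS) ffunE.
Qed.

Lemma sum_bits_merge (R : nmodType) (F : bits 'I_n -> R) :
  \sum_z F z = \sum_(a : bits (outS S)) \sum_(k : bits (inS S)) F (Defs.merge a k).
Proof.
rewrite pair_bigA (reindex (fun p : bits (outS S) * bits (inS S) => Defs.merge p.1 p.2)) //=.
exists (fun z => (proj_out z, proj_in z)) => [[a k] _ | z _]; last exact: merge_proj.
congr pair; apply/ffunP => -[i iS]; rewrite ffunE /=.
  by rewrite (merge_out iS).
by rewrite (merge_in iS).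
Qed.

Definition splice (z w : bits 'I_n) : bits 'I_n :=
  [ffun i => if i \in S then z i else w i].

Lemma splice_merge (a b : bits (outS S)) (k l : bits (inS S)) :
  splice (Defs.merge a k) (Defs.merge b l) = Defs.merge b k.
Proof.
apply/ffunP => i; rewrite ffunE; have [iS | iS] := boolP (i \in S).
  by rewrite !(merge_in iS).
by rewrite !(merge_out iS).
Qed.

Definition ptr_form (V W : qop 'I_n) : algC :=
  \sum_z \sum_w V z (splice z w) * W w (splice w z).

Lemma qtr_mul_ptrace V W : qtr (qmul (ptrace S V) (ptrace S W)) = ptr_form V W.
Proof.
rewrite /ptr_form /qtr /qmul /ptrace sum_bits_merge; apply: eq_bigr => a _.
under eq_bigr => b _ do rewrite big_distrl /=.
rewrite exchange_big /=; apply: eq_bigr => k _; rewrite sum_bits_merge.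
apply: eq_bigr => b _; rewrite big_distrr /=.
by apply: eq_bigr => l _; rewrite !splice_merge.
Qed.

Lemma ptr_form_expansion V W (c d : {ffun 'I_n -> 'I_4} -> algC) :
  (forall a b, V a b = \sum_x c x * sigma x a b) ->
  (forall a b, W a b = \sum_x d x * sigma x a b) ->
  ptr_form V W = \sum_x \sum_y c x * d y * ptr_form (sigma x) (sigma y).
Proof.
move=> V_exp W_exp; rewrite /ptr_form.
transitivity (\sum_z \sum_w \sum_x \sum_y
    c x * d y * (sigma x z (splice z w) * sigma y w (splice w z))).
  apply: eq_bigr => z _; apply: eq_bigr => w _; rewrite V_exp W_exp big_distrlr /=.
  by apply: eq_bigr => x _; apply: eq_bigr => y _; rewrite mulrACA.
under eq_bigr => z _ do rewrite exchange_big /=.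
rewrite exchange_big /=; apply: eq_bigr => x _.
under eq_bigr => z _ do rewrite exchange_big /=.
rewrite exchange_big /=; apply: eq_bigr => y _.
by rewrite mulr_sumr; apply: eq_bigr => z _; rewrite mulr_sumr.
Qed.

Lemma ptr_form_sigma x y :
  ptr_form (sigma x) (sigma y)
  = ((x == y) && (supp x :&: S == set0))%:R * 2 ^+ (n + #|S|).
Proof.
pose F i r s := if i \in S then pauli1 (x i) r r * pauli1 (y i) s s
                else pauli1 (x i) r s * pauli1 (y i) s r.
have -> : ptr_form (sigma x) (sigma y) = \prod_i \sum_r \sum_s F i r s.
  rewrite -sum_ffun2_prod; apply: eq_bigr => z _; apply: eq_bigr => w _.
  by rewrite -big_split; apply: eq_bigr => i _; rewrite /F !ffunE; case: (i \in S).
have qubitE i : \sum_r \sum_s F i r s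
    = ((x i == y i) && ((i \in S) ==> (nat_of_ord (x i) == 0%N)))%:R
      * (2 * if i \in S then 2 else 1).
  rewrite /F; case: (i \in S); last by rewrite pauli1_orthogonal andbT mulr1.
  rewrite -big_distrlr /= !pauli1_trace.
  by case: (x i) (y i) => [[|kx] ?] [[|ky] ?]; rewrite /= ?andbF ?mul0r ?mulr0 ?mul1r.
rewrite (eq_bigr _ (fun i _ => qubitE i)) prodr_nat_bool_mul big_split /=.
rewrite prodr_const card_ord -big_mkcond prodr_const exprD.
by rewrite forall_eq_supp_disjoint.
Qed.

Lemma ptr_form_adj U (Uhat : {ffun 'I_n -> 'I_4} -> algC) :
  (forall a b, U a b = \sum_x Uhat x * sigma x a b) ->
  ptr_form (qadj U) U = (\sum_(x | supp x :&: S == set0) `|Uhat x| ^+ 2) * 2 ^+ (n + #|S|).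
Proof.
move=> U_exp.
rewrite (ptr_form_expansion (qadj_pauli_expansion U_exp) U_exp) mulr_suml [RHS]big_mkcond.
apply: eq_bigr => x _; rewrite (bigD1 x) //= big1 => [|y yx]; last first.
  by rewrite ptr_form_sigma eq_sym (negbTE yx) mul0r mulr0.
rewrite addr0 ptr_form_sigma eqxx normCK [_ * Uhat x]mulrC.
by case: (_ == set0); rewrite ?mul1r ?mul0r ?mulr0.
Qed.

End PartialTrace.

Lemma qtr_mul_ptr_form_set0 n (V W : qop 'I_n) : qtr (qmul V W) = ptr_form set0 V W.
Proof.
rewrite /qtr /qmul /ptr_form; apply: eq_bigr => z _; apply: eq_bigr => w _.
by congr (V _ _ * W _ _); apply/ffunP => i; rewrite ffunE in_set0.
Qed.

Lemma qtr_qid n : qtr (@qid 'I_n) = 2 ^+ n.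
Proof.
rewrite /qtr /qid (eq_bigr (fun _ => 1)) => [|a _]; last by rewrite eqxx.
by rewrite sumr_const card_ffun card_bool card_ord natrX.
Qed.

Lemma exp2_neq0 m : (2 : algC) ^+ m != 0.
Proof. by rewrite expf_neq0 // pnatr_eq0. Qed.

Lemma pauli_parseval n (U : qop 'I_n) (Uhat : {ffun 'I_n -> 'I_4} -> algC) :
  unitary U -> (forall a b, U a b = \sum_x Uhat x * sigma x a b) ->
  \sum_x `|Uhat x| ^+ 2 = 1.
Proof.
move=> [UU _] U_exp; apply: (mulIf (exp2_neq0 n)); rewrite mul1r.
have := qtr_qid n; rewrite -UU qtr_mul_ptr_form_set0 (ptr_form_adj _ U_exp) cards0 addn0.
by rewrite (eq_bigl xpredT) // => x; rewrite setI0 eqxx.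
Qed.

Lemma Inf_ptrace n (U : qop 'I_n) (Uhat : {ffun 'I_n -> 'I_4} -> algC) (S : {set 'I_n}) :
  unitary U -> (forall a b, U a b = \sum_x Uhat x * sigma x a b) ->
  Inf Uhat S = 1 - (2 ^+ (n + #|S|))^-1 * qtr (qmul (ptrace S (qadj U)) (ptrace S U)).
Proof.
move=> U_unitary U_exp.
rewrite qtr_mul_ptrace (ptr_form_adj _ U_exp) mulrC mulfK ?exp2_neq0 //.
rewrite -(pauli_parseval U_unitary U_exp) (bigID (fun x => supp x :&: S == set0)) /=.
by rewrite addrC addrK.
Qed.

Theorem mainTheorem12 (n : nat) (U : qop 'I_n)
    (Uhat : {ffun 'I_n -> 'I_4} -> algC) :
  unitary U ->
  (forall a b, U a b = \sum_(x : {ffun 'I_n -> 'I_4}) Uhat x * sigma x a b) ->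
  (forall j : 'I_n,
     Inf Uhat [set j] =
     1 - (2 ^+ (n + 1))^-1 * qtr (qmul (ptrace [set j] (qadj U)) (ptrace [set j] U)))
  /\
  (forall S : {set 'I_n},
     Inf Uhat S =
     1 - (2 ^+ (n + #|S|))^-1 * qtr (qmul (ptrace S (qadj U)) (ptrace S U))).
Proof.
move=> U_unitary U_exp.
split=> [j | S]; last exact: Inf_ptrace.
by rewrite (Inf_ptrace _ U_unitary U_exp) cards1.
Qed.
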